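(* The cut rule is admissible for system $\mathcal S$: every sequent derivable in $\mathcal S$ has a derivation in $\mathcal S$ without instances of the cut rule.
   Context: Fix countably infinite sets of names and variables and the constructors $\mathsf{pub}$ (unary) and $\mathsf{sign},\mathsf{blind},\langle\cdot,\cdot\rangle,\{\cdot\}_{\cdot}$ (binary). Let $E$ be the union of AC-convergent equational theories $E_1,\dots,E_n$ with pairwise disjoint signatures, all disjoint from the constructors, each containing at most one associative-commutative (AC) binary symbol $\oplus_i$; $E$ is presented by a rewrite system $R_E$ terminating and confluent modulo AC of the $\oplus_i$; $\Sigma_E$ is its signature. Terms: names, variables, $\mathsf{pub}(M)$, $\mathsf{sign}(M,N)$, $\mathsf{blind}(M,N)$, $\langle M,N\rangle$, $\{M\}_N$, $g(M_1,\dots,M_j)$ with $g\in\Sigma_E$; all terms ground. $\equiv$ is equality modulo AC; $\approx_E$ equality modulo $E$. A term is guarded if it is a name, a variable, or headed by a constructor. An $E$-context is a term with holes built only from function symbols of $\Sigma_E$. A sequent $\Gamma\vdash M$ is a finite set $\Gamma$ of terms and a term $M$, all in $R_E$-normal form modulo AC; $\Gamma,M$ means $\Gamma\cup\{M\}$. System $\mathcal S$: (id) $\Gamma\vdash M$ with no premise, if $M\approx_E C[M_1,\dots,M_k]$ for some $E$-context $C$ and $M_1,\dots,M_k\in\Gamma$; (cut) from $\Gamma\vdash M$ and $\Gamma,M\vdash T$ infer $\Gamma\vdash T$; ($p_L$) from $\Gamma,\langle M,N\rangle,M,N\vdash T$ infer $\Gamma,\langle M,N\rangle\vdash T$; ($p_R$)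 from $\Gamma\vdash M$, $\Gamma\vdash N$ infer $\Gamma\vdash\langle M,N\rangle$; ($e_L$) from $\Gamma,\{M\}_K\vdash K$ and $\Gamma,\{M\}_K,M,K\vdash N$ infer $\Gamma,\{M\}_K\vdash N$; ($e_R$) from $\Gamma\vdash M$, $\Gamma\vdash K$ infer $\Gamma\vdash\{M\}_K$; ($\mathsf{sign}_L$) from $\Gamma,\mathsf{sign}(M,K),\mathsf{pub}(L),M\vdash N$ infer $\Gamma,\mathsf{sign}(M,K),\mathsf{pub}(L)\vdash N$, provided $K\equiv L$; ($\mathsf{sign}_R$) from $\Gamma\vdash M$, $\Gamma\vdash K$ infer $\Gamma\vdash\mathsf{sign}(M,K)$; ($\mathsf{blind}_{L1}$) from $\Gamma,\mathsf{blind}(M,K)\vdash K$ and $\Gamma,\mathsf{blind}(M,K),M,K\vdash N$ infer $\Gamma,\mathsf{blind}(M,K)\vdash N$; ($\mathsf{blind}_R$) from $\Gamma\vdash M$, $\Gamma\vdash K$ infer $\Gamma\vdash\mathsf{blind}(M,K)$; ($\mathsf{blind}_{L2}$) from $\Gamma,\mathsf{sign}(\mathsf{blind}(M,R),K)\vdash R$ and $\Gamma,\mathsf{sign}(\mathsf{blind}(M,R),K),\mathsf{sign}(M,K),R\vdash N$ infer $\Gamma,\mathsf{sign}(\mathsf{blind}(M,R),K)\vdash N$; ($gs$) from $\Gamma\vdash A$ and $\Gamma,A\vdash M$ infer $\Gamma\vdash M$, provided $A$ is a guarded subterm of a term in $\Gamma\cup\{M\}$. *)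

(* Intruder-deduction sequent system S modulo a union E of
   AC-convergent equational theories with disjoint signatures. *)
From Stdlib Require Import List Relations.
Import ListNotations.
Set Implicit Arguments.

Record signature := Signature {
  sym : Type;
  arity : sym -> nat;
  theory : sym -> nat;        (* index i of the theory E_i the symbol belongs to *)
  isAC : sym -> Prop
}.

Inductive term (F : Type) : Type :=
| Name (a : nat)
| Var (x : nat)
| Pub (M : term F)
| Sign (M K : term F)
| Blind (M K : term F)
| Pair (M N : term F)
| Enc (M K : term F)
| App (g : F) (args : list (term F)).
Arguments Name {F} a.
Arguments Var {F} x.

Inductive wf_term {S : signature} : term (sym S) -> Prop :=
| wf_name a : wf_term (Name a)
| wf_var x : wf_term (Var x)
| wf_pub M : wf_term M -> wf_term (Pub M)
| wf_sign M K : wf_term M -> wf_term K -> wf_term (Sign M K)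
| wf_blind M K : wf_term M -> wf_term K -> wf_term (Blind M K)
| wf_pair M N : wf_term M -> wf_term N -> wf_term (Pair M N)
| wf_enc M K : wf_term M -> wf_term K -> wf_term (Enc M K)
| wf_app g l : length l = arity S g -> Forall wf_term l -> wf_term (App g l).

Inductive pat (F : Type) : Type :=
| PVar (x : nat)
| PApp (g : F) (args : list (pat F)).
Arguments PVar {F} x.

Fixpoint inst {F : Type} (s : nat -> term F) (p : pat F) : term F :=
  match p with
  | PVar x => s x
  | PApp g l => App g (map (inst s) l)
  end.

Inductive pat_over {F : Type} (P : F -> Prop) : pat F -> Prop :=
| po_var x : pat_over P (PVar x)
| po_app g l : P g -> Forall (pat_over P) l -> pat_over P (PApp g l).

Inductive pat_wf {S : signature} : pat (sym S) -> Prop :=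
| pw_var x : pat_wf (PVar x)
| pw_app g l : length l = arity S g -> Forall pat_wf l -> pat_wf (PApp g l).

Inductive ctx_closure {F : Type} (R : term F -> term F -> Prop) : term F -> term F -> Prop :=
| cc_base s t : R s t -> ctx_closure R s t
| cc_pub s t : ctx_closure R s t -> ctx_closure R (Pub s) (Pub t)
| cc_sign1 s t u : ctx_closure R s t -> ctx_closure R (Sign s u) (Sign t u)
| cc_sign2 s t u : ctx_closure R s t -> ctx_closure R (Sign u s) (Sign u t)
| cc_blind1 s t u : ctx_closure R s t -> ctx_closure R (Blind s u) (Blind t u)
| cc_blind2 s t u : ctx_closure R s t -> ctx_closure R (Blind u s) (Blind u t)
| cc_pair1 s t u : ctx_closure R s t -> ctx_closure R (Pair s u) (Pair t u)
| cc_pair2 s t u : ctx_closure R s t -> ctx_closure R (Pair u s) (Pair u t)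
| cc_enc1 s t u : ctx_closure R s t -> ctx_closure R (Enc s u) (Enc t u)
| cc_enc2 s t u : ctx_closure R s t -> ctx_closure R (Enc u s) (Enc u t)
| cc_app g l1 l2 s t : ctx_closure R s t ->
    ctx_closure R (App g (l1 ++ s :: l2)) (App g (l1 ++ t :: l2)).

Definition cong_eq {F : Type} (R : term F -> term F -> Prop) : term F -> term F -> Prop :=
  clos_refl_sym_trans (term F) (ctx_closure R).

Inductive ac_axiom {F : Type} (ac : F -> Prop) : term F -> term F -> Prop :=
| ac_comm f a b : ac f -> ac_axiom ac (App f [a; b]) (App f [b; a])
| ac_assoc f a b c : ac f ->
    ac_axiom ac (App f [App f [a; b]; c]) (App f [a; App f [b; c]]).

Definition rule_axiom {F : Type} (R : pat F -> pat F -> Prop) (s t : term F) : Prop :=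
  exists l r (sigma : nat -> term F), R l r /\ s = inst sigma l /\ t = inst sigma r.

Definition ac_eq {F : Type} (ac : F -> Prop) := cong_eq (ac_axiom ac).

Definition eq_mod {F : Type} (R : pat F -> pat F -> Prop) (ac : F -> Prop) :=
  cong_eq (fun s t => ac_axiom ac s t \/ rule_axiom R s t).

Definition step {F : Type} (R : pat F -> pat F -> Prop) (ac : F -> Prop) (s t : term F) : Prop :=
  exists s' t', ac_eq ac s s' /\ ctx_closure (rule_axiom R) s' t' /\ ac_eq ac t' t.

Definition normal {F : Type} R ac (s : term F) : Prop := forall t, ~ step R ac s t.

Definition terminating_mod {F : Type} R ac : Prop :=
  well_founded (fun t s : term F => step R ac s t).

Definition confluent_mod {F : Type} R ac : Prop :=
  forall s t : term F, eq_mod R ac s t ->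
    exists u v, clos_refl_trans _ (step R ac) s u /\
                clos_refl_trans _ (step R ac) t v /\ ac_eq ac u v.

Definition convergent_mod {F : Type} R ac : Prop :=
  @terminating_mod F R ac /\ @confluent_mod F R ac.

Definition R_E {S : signature} (rules : list (pat (sym S) * pat (sym S))) l r : Prop :=
  In (l, r) rules.

Definition R_i {S : signature} (rules : list (pat (sym S) * pat (sym S))) (i : nat) l r : Prop :=
  In (l, r) rules /\ pat_over (fun g => theory S g = i) l /\ pat_over (fun g => theory S g = i) r.

Definition AC_i (S : signature) (i : nat) (f : sym S) : Prop := isAC S f /\ theory S f = i.

Definition admissible_theory (S : signature) (n : nat)
    (rules : list (pat (sym S) * pat (sym S))) : Prop :=
  (* the signatures of E_0..E_{n-1} partition Sigma_E *)
  (forall g, theory S g < n) /\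
  (forall f, isAC S f -> arity S f = 2) /\
  (forall f g, isAC S f -> isAC S g -> theory S f = theory S g -> f = g) /\
  (forall l r, In (l, r) rules -> pat_wf l /\ pat_wf r /\
       exists i, pat_over (fun g => theory S g = i) l /\ pat_over (fun g => theory S g = i) r) /\
  (forall i, i < n -> convergent_mod (R_i rules i) (AC_i S i)) /\
  convergent_mod (R_E rules) (isAC S).

Section System.
Variable S : signature.
Variable rules : list (pat (sym S) * pat (sym S)).
Notation T := (term (sym S)).

Definition is_sequent (G : list T) (M : T) : Prop :=
  Forall (fun t => wf_term t /\ normal (R_E rules) (isAC S) t) (M :: G).

Definition E_eq := eq_mod (R_E rules) (isAC S).

(** t = C[M1,...,Mk] for an E-context C and M1..Mk in G *)
Inductive E_ctx_over (G : list T) : T -> Prop :=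
| ec_hole M : In M G -> E_ctx_over G M
| ec_app g l : length l = arity S g -> Forall (E_ctx_over G) l -> E_ctx_over G (App g l).

Inductive subterm (A : T) : T -> Prop :=
| st_refl : subterm A A
| st_pub M : subterm A M -> subterm A (Pub M)
| st_sign1 M K : subterm A M -> subterm A (Sign M K)
| st_sign2 M K : subterm A K -> subterm A (Sign M K)
| st_blind1 M K : subterm A M -> subterm A (Blind M K)
| st_blind2 M K : subterm A K -> subterm A (Blind M K)
| st_pair1 M K : subterm A M -> subterm A (Pair M K)
| st_pair2 M K : subterm A K -> subterm A (Pair M K)
| st_enc1 M K : subterm A M -> subterm A (Enc M K)
| st_enc2 M K : subterm A K -> subterm A (Enc M K)
| st_app g l u : In u l -> subterm A u -> subterm A (App g l).

Definition guarded (t : T) : Prop :=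
  match t with App _ _ => False | _ => True end.

(** Contexts G are lists read as
    finite sets; "G, M" is [M :: G]; every node must be a sequent. *)
Inductive derivable (with_cut : bool) : list T -> T -> Prop :=
| d_id G M C : is_sequent G M -> E_ctx_over G C -> E_eq M C -> derivable with_cut G M
| d_cut G M N : with_cut = true -> is_sequent G N ->
    derivable with_cut G M -> derivable with_cut (M :: G) N -> derivable with_cut G N
| d_pL G M N U : is_sequent G U -> In (Pair M N) G ->
    derivable with_cut (M :: N :: G) U -> derivable with_cut G U
| d_pR G M N : is_sequent G (Pair M N) ->
    derivable with_cut G M -> derivable with_cut G N -> derivable with_cut G (Pair M N)
| d_eL G M K N : is_sequent G N -> In (Enc M K) G ->
    derivable with_cut G K -> derivable with_cut (M :: K :: G) N -> derivable with_cut G N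
| d_eR G M K : is_sequent G (Enc M K) ->
    derivable with_cut G M -> derivable with_cut G K -> derivable with_cut G (Enc M K)
| d_signL G M K L N : is_sequent G N -> In (Sign M K) G -> In (Pub L) G ->
    ac_eq (isAC S) K L ->
    derivable with_cut (M :: G) N -> derivable with_cut G N
| d_signR G M K : is_sequent G (Sign M K) ->
    derivable with_cut G M -> derivable with_cut G K -> derivable with_cut G (Sign M K)
| d_blindL1 G M K N : is_sequent G N -> In (Blind M K) G ->
    derivable with_cut G K -> derivable with_cut (M :: K :: G) N -> derivable with_cut G N
| d_blindR G M K : is_sequent G (Blind M K) ->
    derivable with_cut G M -> derivable with_cut G K -> derivable with_cut G (Blind M K)
| d_blindL2 G M R K N : is_sequent G N -> In (Sign (Blind M R) K) G ->
    derivable with_cut G R -> derivable with_cut (Sign M K :: R :: G) N ->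
    derivable with_cut G N
| d_gs G A M : is_sequent G M -> guarded A ->
    (exists u, In u (M :: G) /\ subterm A u) ->
    derivable with_cut G A -> derivable with_cut (A :: G) M -> derivable with_cut G M.

End System.

(* Cut on M is eliminated by induction on the size of M, then on a derivation of G |- M,
   then on a derivation of M, G |- N.  A left rule ending G |- M permutes with the cut.
   Otherwise every use of M in the second derivation, at an (id) leaf or as principal
   term of a left rule, is removed.  If M was built by a right rule, a left rule on M
   becomes cuts on its smaller components, and an (id) leaf either reintroduces M by
   (gs) when M occurs up to E as a guarded subterm of the sequent, or else abstracts M
   away.  If M =E C[G] by (id), then a guarded normal M is AC-equal to a guarded
   subterm B of G, since otherwise abstracting M by an arbitrary term in this equation
   would make all terms E-equal; (gs) then brings B into the context and the left rule
   is applied to B instead, up to cuts on AC-variants of the smaller components. *)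

From Stdlib Require Import List Relations Lia Classical ClassicalEpsilon Wf_nat.
Import ListNotations.
Set Implicit Arguments.

#[local] Hint Constructors subterm ctx_closure : core.

Lemma Forall_exists_Forall2 (A B : Type) (R : A -> B -> Prop) (l : list A) :
  Forall (fun a => exists b, R a b) l -> exists l', Forall2 R l l'.
Proof.
  induction 1 as [|a l [b Hab] _ [l' IH]]; [now exists []|].
  exists (b :: l'); now constructor.
Qed.


Section Terms.
Variable F : Type.
Notation T := (term F).

Section TermInd.
Variable P : T -> Prop.
Hypotheses (HName : forall a, P (Name a)) (HVar : forall x, P (Var x))
  (HPub : forall M, P M -> P (Pub M))
  (HSign : forall M K, P M -> P K -> P (Sign M K))
  (HBlind : forall M K, P M -> P K -> P (Blind M K))
  (HPair : forall M K, P M -> P K -> P (Pair M K))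
  (HEnc : forall M K, P M -> P K -> P (Enc M K))
  (HApp : forall g l, Forall P l -> P (App g l)).

Fixpoint term_ind' (t : T) : P t :=
  match t with
  | Name a => HName a
  | Var x => HVar x
  | Pub M => HPub (term_ind' M)
  | Sign M K => HSign (term_ind' M) (term_ind' K)
  | Blind M K => HBlind (term_ind' M) (term_ind' K)
  | Pair M K => HPair (term_ind' M) (term_ind' K)
  | Enc M K => HEnc (term_ind' M) (term_ind' K)
  | App g l => HApp g ((fix args (l : list T) : Forall P l :=
      match l with
      | [] => Forall_nil _
      | x :: r => Forall_cons _ (term_ind' x) (args r)
      end) l)
  end.
End TermInd.

Fixpoint size (t : T) : nat :=
  match t with
  | Name _ | Var _ => 1
  | Pub M => S (size M)
  | Sign M K | Blind M K | Pair M K | Enc M K => S (size M + size K)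
  | App _ l => S (list_sum (map size l))
  end.

Lemma size_arg g l u : In u l -> size u < size (App g l).
Proof.
  simpl; induction l as [|x l IH]; simpl; [tauto|].
  intros [<-|Hu]; [lia|specialize (IH Hu); lia].
Qed.

Section Congruence.
Variable R : T -> T -> Prop.

Lemma cong_eq_lift (f : T -> T) :
  (forall s t, ctx_closure R s t -> ctx_closure R (f s) (f t)) ->
  forall s t, cong_eq R s t -> cong_eq R (f s) (f t).
Proof.
  intros Hf s t H; induction H.
  - apply rst_step; auto.
  - apply rst_refl.
  - apply rst_sym; auto.
  - eapply rst_trans; eauto.
Qed.

Lemma cong_pub s t : cong_eq R s t -> cong_eq R (Pub s) (Pub t).
Proof. apply (cong_eq_lift (fun x => Pub x)), cc_pub. Qed.

Lemma cong_binary (c : T -> T -> T) :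
  (forall s t u, ctx_closure R s t -> ctx_closure R (c s u) (c t u)) ->
  (forall s t u, ctx_closure R s t -> ctx_closure R (c u s) (c u t)) ->
  forall s t u v, cong_eq R s t -> cong_eq R u v -> cong_eq R (c s u) (c t v).
Proof.
  intros H1 H2 s t u v Hst Huv. apply rst_trans with (c t u).
  - exact (cong_eq_lift (fun x => c x u) (fun a b => H1 a b u) Hst).
  - exact (cong_eq_lift (fun x => c t x) (fun a b => H2 a b t) Huv).
Qed.

Lemma cong_sign s t u v : cong_eq R s t -> cong_eq R u v -> cong_eq R (Sign s u) (Sign t v).
Proof. apply (cong_binary (fun a b => Sign a b)); [apply cc_sign1 | apply cc_sign2]. Qed.
Lemma cong_blind s t u v : cong_eq R s t -> cong_eq R u v -> cong_eq R (Blind s u) (Blind t v).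
Proof. apply (cong_binary (fun a b => Blind a b)); [apply cc_blind1 | apply cc_blind2]. Qed.
Lemma cong_pair s t u v : cong_eq R s t -> cong_eq R u v -> cong_eq R (Pair s u) (Pair t v).
Proof. apply (cong_binary (fun a b => Pair a b)); [apply cc_pair1 | apply cc_pair2]. Qed.
Lemma cong_enc s t u v : cong_eq R s t -> cong_eq R u v -> cong_eq R (Enc s u) (Enc t v).
Proof. apply (cong_binary (fun a b => Enc a b)); [apply cc_enc1 | apply cc_enc2]. Qed.

Lemma cong_app_at g l1 l2 s t : cong_eq R s t ->
  cong_eq R (App g (l1 ++ s :: l2)) (App g (l1 ++ t :: l2)).
Proof. apply (cong_eq_lift (fun x => App g (l1 ++ x :: l2))), cc_app. Qed.

Lemma cong_app g l l' : Forall2 (cong_eq R) l l' -> cong_eq R (App g l) (App g l').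
Proof.
  intros H. enough (forall pre, cong_eq R (App g (pre ++ l)) (App g (pre ++ l'))) as H'
    by exact (H' []).
  induction H as [|x y l l' Hxy _ IH]; intros pre; [apply rst_refl|].
  apply rst_trans with (App g (pre ++ y :: l)); [now apply cong_app_at|].
  specialize (IH (pre ++ [y])). now rewrite <- !app_assoc in IH.
Qed.

Lemma cong_eq_mono (R' : T -> T -> Prop) : (forall s t, R s t -> R' s t) ->
  forall s t, cong_eq R s t -> cong_eq R' s t.
Proof.
  intros HR s t H; induction H as [s t H| | |].
  - apply rst_step; induction H; [apply cc_base, HR, H | constructor; assumption ..].
  - apply rst_refl.
  - apply rst_sym; auto.
  - eapply rst_trans; eauto.
Qed.
End Congruence.

Section AC.
Variable ac : F -> Prop.

Definition same_shape (s t : T) : Prop :=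
  match s, t with
  | Name a, Name b | Var a, Var b => a = b
  | Pub a, Pub b => ac_eq ac a b
  | Sign a b, Sign c d | Blind a b, Blind c d | Pair a b, Pair c d | Enc a b, Enc c d =>
      ac_eq ac a c /\ ac_eq ac b d
  | App _ _, App _ _ => True
  | _, _ => False
  end.

(* AC axioms only rewrite [App] nodes, so no step changes any other head constructor. *)
Lemma ac_eq_same_shape s t : ac_eq ac s t -> same_shape s t.
Proof.
  induction 1 as [s t H|s|s t _ IH|s t u _ IH1 _ IH2].
  - destruct H as [s t H| | | | | | | | | |]; [destruct H| ..]; simpl; repeat split;
      solve [apply rst_refl | apply rst_step; assumption].
  - destruct s; simpl; repeat split; apply rst_refl.
  - destruct s, t; simpl in *; intuition (auto; apply rst_sym; auto).
  - destruct s, t; simpl in *; try tauto; destruct u; simpl in *; try tauto;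
      intuition (try congruence; eapply rst_trans; eauto).
Qed.

Ltac shape_inv := intros H; apply ac_eq_same_shape in H;
  match type of H with same_shape ?B _ => destruct B; simpl in H; try contradiction; eauto end.

Lemma ac_eq_Pub_inv B a : ac_eq ac B (Pub a) -> exists a', B = Pub a' /\ ac_eq ac a' a.
Proof. shape_inv. Qed.
Lemma ac_eq_Sign_inv B a b : ac_eq ac B (Sign a b) ->
  exists a' b', B = Sign a' b' /\ ac_eq ac a' a /\ ac_eq ac b' b.
Proof. shape_inv. Qed.
Lemma ac_eq_Blind_inv B a b : ac_eq ac B (Blind a b) ->
  exists a' b', B = Blind a' b' /\ ac_eq ac a' a /\ ac_eq ac b' b.
Proof. shape_inv. Qed.
Lemma ac_eq_Pair_inv B a b : ac_eq ac B (Pair a b) ->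
  exists a' b', B = Pair a' b' /\ ac_eq ac a' a /\ ac_eq ac b' b.
Proof. shape_inv. Qed.
Lemma ac_eq_Enc_inv B a b : ac_eq ac B (Enc a b) ->
  exists a' b', B = Enc a' b' /\ ac_eq ac a' a /\ ac_eq ac b' b.
Proof. shape_inv. Qed.
End AC.
End Terms.

Section Subterms.
Variable S : signature.
Notation T := (term (sym S)).

Lemma subterm_size A u : subterm S A u -> A = u \/ size A < size u.
Proof.
  induction 1 as [|? _ IH|? ? _ IH|? ? _ IH|? ? _ IH|? ? _ IH|? ? _ IH|? ? _ IH|? ? _ IH
    |? ? _ IH|g l u Hu _ IH]; auto; right; destruct IH as [->|IH]; try (simpl; lia);
    pose proof (@size_arg _ g l u Hu); lia.
Qed.

Lemma wf_subterm A u : subterm S A u -> wf_term u -> wf_term A.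
Proof.
  induction 1; intros Hw; auto; apply IHsubterm; inversion Hw; subst; auto.
  eapply Forall_forall; eauto.
Qed.

Variables (R : pat (sym S) -> pat (sym S) -> Prop) (ac : sym S -> Prop).

Lemma step_lift (f : T -> T) s t :
  (forall Q s t, ctx_closure Q s t -> ctx_closure Q (f s) (f t)) ->
  step R ac s t -> step R ac (f s) (f t).
Proof.
  intros Hf [s' [t' [H1 [H2 H3]]]]. exists (f s'), (f t').
  split; [|split]; [apply cong_eq_lift| |apply cong_eq_lift]; auto.
Qed.

Lemma normal_subterm A u : subterm S A u -> normal R ac u -> normal R ac A.
Proof.
  induction 1 as [|M ? IH|M K ? IH|M K ? IH|M K ? IH|M K ? IH|M K ? IH|M K ? IH|M K ? IH
    |M K ? IH|g l u Hu ? IH];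
    intros Hn; auto; apply IH; intros v Hv.
  - apply (Hn (Pub v)); apply (step_lift (fun x => Pub x)); [auto|exact Hv].
  - apply (Hn (Sign v K)); apply (step_lift (fun x => Sign x K)); [auto|exact Hv].
  - apply (Hn (Sign M v)); apply (step_lift (fun x => Sign M x)); [auto|exact Hv].
  - apply (Hn (Blind v K)); apply (step_lift (fun x => Blind x K)); [auto|exact Hv].
  - apply (Hn (Blind M v)); apply (step_lift (fun x => Blind M x)); [auto|exact Hv].
  - apply (Hn (Pair v K)); apply (step_lift (fun x => Pair x K)); [auto|exact Hv].
  - apply (Hn (Pair M v)); apply (step_lift (fun x => Pair M x)); [auto|exact Hv].
  - apply (Hn (Enc v K)); apply (step_lift (fun x => Enc x K)); [auto|exact Hv].
  - apply (Hn (Enc M v)); apply (step_lift (fun x => Enc M x)); [auto|exact Hv].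
  - destruct (in_split _ _ Hu) as [l1 [l2 ->]].
    apply (Hn (App g (l1 ++ v :: l2))).
    apply (step_lift (fun x => App g (l1 ++ x :: l2))); [auto|exact Hv].
Qed.

Lemma normal_ac_eq s t : ac_eq ac s t -> normal R ac s -> normal R ac t.
Proof.
  intros Hst Hs u [t' [u' [H1 H2]]]. apply (Hs u). exists t', u'.
  split; [eapply rst_trans|]; eauto.
Qed.
End Subterms.

Section Sequents.
Variable Sg : signature.
Variable rules : list (pat (sym Sg) * pat (sym Sg)).
Notation T := (term (sym Sg)).
Notation derivable := (derivable Sg rules).
Notation is_sequent := (is_sequent Sg rules).
Notation E_ctx_over := (E_ctx_over Sg).
Notation E_eq := (E_eq Sg rules).

Definition valid (t : T) : Prop := wf_term t /\ normal (R_E rules) (isAC Sg) t.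

Lemma valid_subterm u A : valid u -> subterm Sg A u -> valid A.
Proof. intros [Hw Hn] H; split; [eapply wf_subterm | eapply normal_subterm]; eauto. Qed.

Lemma derivable_sequent b G M : derivable b G M -> is_sequent G M.
Proof. destruct 1; assumption. Qed.

Lemma derivable_ctx_valid b G M : derivable b G M -> Forall valid G.
Proof. intros D; exact (Forall_inv_tail (derivable_sequent D)). Qed.

Lemma derivable_goal_valid b G M : derivable b G M -> valid M.
Proof. intros D; exact (Forall_inv (derivable_sequent D)). Qed.

Lemma sequent_weaken G G' M : is_sequent G M -> Forall valid G' -> is_sequent G' M.
Proof. intros H H'; exact (Forall_cons _ (Forall_inv H) H'). Qed.

Lemma valid_prefix (xs : list T) G G' :
  Forall valid (xs ++ G) -> Forall valid G' -> Forall valid (xs ++ G').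
Proof. rewrite !Forall_app; tauto. Qed.

Section ECtxInd.
Variables (G : list T) (P : T -> Prop).
Hypothesis Hhole : forall M, In M G -> P M.
Hypothesis Happ : forall g l, length l = arity Sg g -> Forall (E_ctx_over G) l -> Forall P l ->
  P (App g l).

Fixpoint E_ctx_over_ind' (t : T) (H : E_ctx_over G t) {struct H} : P t :=
  match H with
  | ec_hole _ _ M h => Hhole M h
  | ec_app g hl hf => Happ g hl hf
      ((fix args l (hf : Forall (E_ctx_over G) l) : Forall P l :=
          match hf with
          | Forall_nil _ => Forall_nil _
          | Forall_cons x hx hl => Forall_cons _ (E_ctx_over_ind' hx) (args _ hl)
          end) _ hf)
  end.
End ECtxInd.

Lemma E_ctx_over_incl G G' C : E_ctx_over G C -> incl G G' -> E_ctx_over G' C.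
Proof.
  intros H Hi; refine (E_ctx_over_ind' (P := E_ctx_over G') _ _ H).
  - intros M HM; now apply ec_hole, Hi.
  - intros g l Hl _ Hargs; now apply ec_app.
Qed.

Ltac weaken_premise xs D IH Hi HG' :=
  apply IH; [exact (incl_app_app (incl_refl xs) Hi)
            | exact (@valid_prefix xs _ _ (derivable_ctx_valid D) HG')].

Lemma weaken b G M : derivable b G M ->
  forall G', incl G G' -> Forall valid G' -> derivable b G' M.
Proof.
  induction 1 as [G M C Hs Hc He|G M N Hb Hs D1 IH1 D2 IH2|G M N U Hs Hin D IH
    |G M N Hs D1 IH1 D2 IH2|G M K N Hs Hin D1 IH1 D2 IH2|G M K Hs D1 IH1 D2 IH2
    |G M K L N Hs Hin Hin' Hac D IH|G M K Hs D1 IH1 D2 IH2|G M K N Hs Hin D1 IH1 D2 IH2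
    |G M K Hs D1 IH1 D2 IH2|G M R K N Hs Hin D1 IH1 D2 IH2|G A M Hs Hg Hex D1 IH1 D2 IH2];
    intros G' Hi HG'; pose proof (sequent_weaken Hs HG') as Hs'.
  - exact (d_id b Hs' (E_ctx_over_incl Hc Hi) He).
  - apply (d_cut Hb Hs' (IH1 G' Hi HG')). weaken_premise [M] D2 IH2 Hi HG'.
  - apply (d_pL Hs' (Hi _ Hin)). weaken_premise [M; N] D IH Hi HG'.
  - exact (d_pR Hs' (IH1 G' Hi HG') (IH2 G' Hi HG')).
  - apply (d_eL Hs' (Hi _ Hin) (IH1 G' Hi HG')). weaken_premise [M; K] D2 IH2 Hi HG'.
  - exact (d_eR Hs' (IH1 G' Hi HG') (IH2 G' Hi HG')).
  - apply (d_signL Hs' (Hi _ Hin) (Hi _ Hin') Hac). weaken_premise [M] D IH Hi HG'.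
  - exact (d_signR Hs' (IH1 G' Hi HG') (IH2 G' Hi HG')).
  - apply (d_blindL1 Hs' (Hi _ Hin) (IH1 G' Hi HG')). weaken_premise [M; K] D2 IH2 Hi HG'.
  - exact (d_blindR Hs' (IH1 G' Hi HG') (IH2 G' Hi HG')).
  - apply (d_blindL2 Hs' (Hi _ Hin) (IH1 G' Hi HG')). weaken_premise [Sign M K; R] D2 IH2 Hi HG'.
  - destruct Hex as [u [Hu Hsub]].
    apply (d_gs Hs' Hg (ex_intro _ u (conj (incl_app_app (incl_refl [M]) Hi u Hu) Hsub))
             (IH1 G' Hi HG')).
    weaken_premise [A] D2 IH2 Hi HG'.
Qed.

Lemma ac_eq_E_eq (s t : T) : ac_eq (isAC Sg) s t -> E_eq s t.
Proof. apply cong_eq_mono; now left. Qed.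

Lemma derivable_id b G M X : In X G -> E_eq M X -> is_sequent G M -> derivable b G M.
Proof. intros HX HE Hs; exact (d_id b Hs (ec_hole _ _ _ HX) HE). Qed.

Lemma E_ctx_over_subst M G G' C D : E_ctx_over (M :: G) C -> E_ctx_over G' D ->
  E_eq D M -> incl G G' -> exists C', E_ctx_over G' C' /\ E_eq C C'.
Proof.
  intros HC HD HDM Hi.
  refine (E_ctx_over_ind' (P := fun C => exists C', E_ctx_over G' C' /\ E_eq C C') _ _ HC).
  - intros X [<-|HX].
    + exists D; split; [exact HD | now apply rst_sym].
    + exists X; split; [now apply ec_hole, Hi | apply rst_refl].
  - intros g l Hl _ Hargs.
    destruct (Forall_exists_Forall2 _ Hargs) as [l' Hl'].
    exists (App g l'); split.
    + apply ec_app; [now rewrite <- (Forall2_length Hl')|].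
      clear Hl Hargs; induction Hl'; constructor; tauto.
    + apply cong_app; exact (Forall2_impl _ (fun a b H => proj2 H) Hl').
Qed.
End Sequents.
Arguments ac_eq_E_eq {Sg rules s t}.

Section Convergence.
Variable F : Type.
Variables (R : pat F -> pat F -> Prop) (ac : F -> Prop).
Notation T := (term F).

(* A variable left-hand side would rewrite [t] to an instance of the right-hand
   side containing [t] again, giving an infinite reduction. *)
Lemma terminating_no_var_lhs x r : terminating_mod R ac -> ~ R (PVar x) r.
Proof.
  intros Hterm Hr. induction (Hterm (Name 0)) as [t _ IH].
  apply (IH (inst (fun _ => t) r)).
  exists t, (inst (fun _ => t) r); split; [apply rst_refl|split; [|apply rst_refl]].
  apply cc_base. now exists (PVar x), r, (fun _ => t).
Qed.

Lemma terminating_normal_Name a : terminating_mod R ac -> normal R ac (Name a).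
Proof.
  intros Hterm t [s' [t' [Hs' [Hstep _]]]].
  apply ac_eq_same_shape in Hs'. destruct s'; simpl in Hs'; try contradiction.
  inversion Hstep as [? ? [l [r [sg [Hr [Hl _]]]]]| | | | | | | | | |]; subst.
  destruct l; [|discriminate]. exact (terminating_no_var_lhs Hterm Hr).
Qed.

Lemma normal_rt_step_eq s u : clos_refl_trans _ (step R ac) s u -> normal R ac s -> s = u.
Proof.
  induction 1 as [s u H| |s t u _ IH1 _ IH2]; intros Hn; auto.
  - exfalso; exact (Hn _ H).
  - specialize (IH1 Hn); subst; auto.
Qed.

Lemma confluent_normal_ac_eq s t : confluent_mod R ac ->
  normal R ac s -> normal R ac t -> eq_mod R ac s t -> ac_eq ac s t.
Proof.
  intros Hconf Hs Ht H. destruct (Hconf _ _ H) as [u [v [Hu [Hv Huv]]]].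
  apply normal_rt_step_eq in Hu; apply normal_rt_step_eq in Hv; subst; auto.
Qed.
End Convergence.

Section Abstraction.
Variable Sg : signature.
Variable rules : list (pat (sym Sg) * pat (sym Sg)).
Notation T := (term (sym Sg)).
Notation E_ctx_over := (E_ctx_over Sg).
Notation E_eq := (E_eq Sg rules).
Variables M d : T.

(* [abstract t] replaces by [d] every maximal guarded subterm of [t] that is
   E-equal to [M]; since the test is modulo E, the operation is compatible with E. *)
Definition hole_if_M (t u : T) : T :=
  if excluded_middle_informative (E_eq t M) then d else u.

Fixpoint abstract (t : T) : T :=
  match t with
  | App g l => App g (map abstract l)
  | Name _ | Var _ => hole_if_M t t
  | Pub a => hole_if_M t (Pub (abstract a))
  | Sign a b => hole_if_M t (Sign (abstract a) (abstract b))
  | Blind a b => hole_if_M t (Blind (abstract a) (abstract b))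
  | Pair a b => hole_if_M t (Pair (abstract a) (abstract b))
  | Enc a b => hole_if_M t (Enc (abstract a) (abstract b))
  end.

Fixpoint abstract_inst (sg : nat -> T) (p : pat (sym Sg)) :
  abstract (inst sg p) = inst (fun x => abstract (sg x)) p.
Proof.
  destruct p as [x|g l]; simpl; [reflexivity|]. f_equal. rewrite map_map.
  induction l as [|q l IH]; simpl; [reflexivity|]. now rewrite IH, abstract_inst.
Qed.

Lemma hole_if_M_compat t t' u u' : E_eq t t' -> E_eq u u' ->
  E_eq (hole_if_M t u) (hole_if_M t' u').
Proof.
  intros Ht Hu; unfold hole_if_M.
  destruct (excluded_middle_informative (E_eq t M)) as [e|n],
    (excluded_middle_informative (E_eq t' M)) as [e'|n']; auto; try apply rst_refl.
  - exfalso; apply n'. eapply rst_trans; [apply rst_sym|]; eauto.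
  - exfalso; apply n. eapply rst_trans; eauto.
Qed.

Lemma abstract_E_eq s t : E_eq s t -> E_eq (abstract s) (abstract t).
Proof.
  induction 1 as [s t H|s|s t _ IH|s t u _ IH1 _ IH2];
    [|apply rst_refl|now apply rst_sym|eapply rst_trans; eauto].
  induction H as [s t [H|[l [r [sg [Hr [-> ->]]]]]]|s t H IH|s t u H IH|s t u H IH|s t u H IH
    |s t u H IH|s t u H IH|s t u H IH|s t u H IH|s t u H IH|g l1 l2 s t H IH].
  - apply rst_step, cc_base; left. destruct H; simpl; now constructor.
  - apply rst_step, cc_base; right. rewrite !abstract_inst. now exists l, r, (fun x => abstract (sg x)).
  - apply hole_if_M_compat; [apply cong_pub, rst_step, H | now apply cong_pub].
  - apply hole_if_M_compat; [apply cong_sign, rst_refl; apply rst_step, H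
                            | apply cong_sign; [exact IH | apply rst_refl]].
  - apply hole_if_M_compat; [apply cong_sign; [apply rst_refl | apply rst_step, H]
                            | apply cong_sign; [apply rst_refl | exact IH]].
  - apply hole_if_M_compat; [apply cong_blind, rst_refl; apply rst_step, H
                            | apply cong_blind; [exact IH | apply rst_refl]].
  - apply hole_if_M_compat; [apply cong_blind; [apply rst_refl | apply rst_step, H]
                            | apply cong_blind; [apply rst_refl | exact IH]].
  - apply hole_if_M_compat; [apply cong_pair, rst_refl; apply rst_step, H
                            | apply cong_pair; [exact IH | apply rst_refl]].
  - apply hole_if_M_compat; [apply cong_pair; [apply rst_refl | apply rst_step, H]
                            | apply cong_pair; [apply rst_refl | exact IH]].
  - apply hole_if_M_compat; [apply cong_enc, rst_refl; apply rst_step, H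
                            | apply cong_enc; [exact IH | apply rst_refl]].
  - apply hole_if_M_compat; [apply cong_enc; [apply rst_refl | apply rst_step, H]
                            | apply cong_enc; [apply rst_refl | exact IH]].
  - simpl; rewrite !map_app; now apply cong_app_at.
Qed.

Lemma hole_if_M_not t u : ~ E_eq t M -> hole_if_M t u = u.
Proof.
  intros Hn; unfold hole_if_M.
  destruct (excluded_middle_informative (E_eq t M)); [contradiction | reflexivity].
Qed.

Lemma abstract_fixed t : (forall B, subterm Sg B t -> guarded Sg B -> ~ E_eq B M) ->
  abstract t = t.
Proof.
  induction t as [| |? IH|? ? IH1 IH2|? ? IH1 IH2|? ? IH1 IH2|? ? IH1 IH2|g l IH]
    using term_ind'; intros Hno.
  8: { simpl; f_equal. transitivity (map (fun x => x) l); [|apply map_id].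
       apply map_ext_in. intros u Hu. rewrite Forall_forall in IH.
       apply IH; [exact Hu|]. intros B HB; apply Hno; eauto. }
  all: simpl; rewrite hole_if_M_not by (apply Hno; [apply st_refl | exact I]).
  all: try rewrite IH; try rewrite IH1; try rewrite IH2; try reflexivity.
  all: intros B HB; apply Hno; auto.
Qed.

Lemma abstract_self : guarded Sg M -> abstract M = d.
Proof.
  intros Hg. destruct M eqn:HM; try contradiction; simpl; unfold hole_if_M;
    destruct (excluded_middle_informative _) as [|n]; auto; exfalso; apply n;
    rewrite HM; apply rst_refl.
Qed.

Lemma abstract_E_ctx_fixed G C : E_ctx_over G C -> (forall g, In g G -> abstract g = g) ->
  abstract C = C.
Proof.
  intros HC HG. refine (E_ctx_over_ind' (P := fun C => abstract C = C) _ _ HC); [exact HG|].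
  intros g l _ _ Hargs; simpl; f_equal.
  induction Hargs as [|x l Hx _ IH]; simpl; [reflexivity|]. now rewrite Hx, IH.
Qed.

Lemma abstract_E_ctx G C : E_ctx_over (M :: G) C -> (forall g, In g G -> abstract g = g) ->
  guarded Sg M -> E_ctx_over (d :: G) (abstract C).
Proof.
  intros HC HG Hg.
  refine (E_ctx_over_ind' (P := fun C => E_ctx_over (d :: G) (abstract C)) _ _ HC).
  - intros X [<-|HX].
    + rewrite abstract_self by exact Hg. now apply ec_hole; left.
    + rewrite HG by exact HX. now apply ec_hole; right.
  - intros g l Hl _ Hargs. simpl; apply ec_app; [now rewrite length_map|].
    now apply Forall_map.
Qed.
End Abstraction.

Ltac incl_solve :=
  let a := fresh "a" in intros a ?;
  repeat match goal with H : incl _ _ |- _ => specialize (H a) end;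
  simpl in *; tauto.

Ltac valid_solve :=
  unfold is_sequent in *;
  repeat match goal with H : Forall _ (_ :: _) |- _ => apply Forall_cons_iff in H as [? ?] end;
  repeat (apply Forall_cons; [assumption|]); assumption.

Ltac weaken_by D :=
  pose proof (derivable_ctx_valid D); apply (weaken D); [incl_solve | valid_solve].

Section CutElimination.
Variable Sg : signature.
Variable rules : list (pat (sym Sg) * pat (sym Sg)).
Hypothesis Hterm : terminating_mod (R_E rules) (isAC Sg).
Hypothesis Hconf : confluent_mod (R_E rules) (isAC Sg).
Notation T := (term (sym Sg)).
Notation der := (derivable Sg rules false).
Notation is_sequent := (is_sequent Sg rules).
Notation E_ctx_over := (E_ctx_over Sg).
Notation E_eq := (E_eq Sg rules).
Notation ac := (ac_eq (isAC Sg)).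
Notation valid := (valid Sg rules).
Notation guarded := (guarded Sg).
Notation subterm := (subterm Sg).

Lemma mk_sequent G M : valid M -> Forall valid G -> is_sequent G M.
Proof. exact (Forall_cons M (l := G)). Qed.

Lemma valid_E_eq_ac_eq s t : valid s -> valid t -> E_eq s t -> ac s t.
Proof. intros [_ Hs] [_ Ht]; exact (confluent_normal_ac_eq Hconf Hs Ht). Qed.

Lemma guarded_generated_subterm G C M : Forall valid G -> E_ctx_over G C -> E_eq M C ->
  guarded M -> valid M -> exists g B, In g G /\ subterm B g /\ guarded B /\ ac B M.
Proof.
  intros HG HC HMC Hg HM. apply NNPP; intros Hno.
  assert (Hfixed : forall d g, In g G -> abstract Sg rules M d g = g).
  { intros d g Hgin. apply abstract_fixed. intros B HB HgB HBM. apply Hno.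
    exists g, B; repeat split; auto. apply valid_E_eq_ac_eq; auto.
    exact (valid_subterm (proj1 (Forall_forall _ _) HG g Hgin) HB). }
  assert (Hall : forall d, E_eq d C).
  { intros d. pose proof (abstract_E_eq M d HMC) as H.
    now rewrite abstract_self, (abstract_E_ctx_fixed _ _ _ HC (Hfixed d)) in H. }
  assert (H01 : ac (Name 0) (Name 1)).
  { apply (confluent_normal_ac_eq Hconf); try apply (terminating_normal_Name Hterm).
    exact (rst_trans _ _ _ _ _ (Hall _) (rst_sym _ _ _ _ (Hall _))). }
  apply ac_eq_same_shape in H01; discriminate.
Qed.

Definition cut_admissible_at (A : T) : Prop :=
  forall G N, der G A -> der (A :: G) N -> der G N.

Definition cut_below (M : T) : Prop := forall A, size A < size M -> cut_admissible_at A.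

(* The premises of a left rule with principal term [X], minus [X] itself; for
   [signL] the principal term is either the signature or the public key. *)
Inductive left_premises (G : list T) (N : T) : T -> Prop :=
| lp_pair P Q : der (P :: Q :: G) N -> left_premises G N (Pair P Q)
| lp_enc P K : der G K -> der (P :: K :: G) N -> left_premises G N (Enc P K)
| lp_sign P K L : In (Pub L) G -> ac K L -> der (P :: G) N -> left_premises G N (Sign P K)
| lp_pub P K L : In (Sign P K) G -> ac K L -> der (P :: G) N -> left_premises G N (Pub L)
| lp_blind P K : der G K -> der (P :: K :: G) N -> left_premises G N (Blind P K)
| lp_blind2 P R K : der G R -> der (Sign P K :: R :: G) N ->
    left_premises G N (Sign (Blind P R) K).

Definition right_premises (G : list T) (M : T) : Prop :=
  match M with
  | Pair a b | Enc a b | Sign a b | Blind a b => der G a /\ der G b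
  | _ => False
  end.

Lemma left_premises_guarded G N X : left_premises G N X -> guarded X.
Proof. destruct 1; exact I. Qed.

Lemma right_premises_guarded {G M} : right_premises G M -> guarded M.
Proof. destruct M; simpl; tauto. Qed.

Lemma left_premises_weaken G G' N X : left_premises G N X -> incl G G' -> Forall valid G' ->
  left_premises G' N X.
Proof.
  intros HX Hi HG'.
  destruct HX as [P Q D|P K DK D|P K L HL HKL D|P K L HS HKL D|P K DK D|P R K DR D].
  - apply lp_pair; weaken_by D.
  - apply lp_enc; [weaken_by DK | weaken_by D].
  - apply (lp_sign (Hi _ HL) HKL); weaken_by D.
  - apply (lp_pub (Hi _ HS) HKL); weaken_by D.
  - apply lp_blind; [weaken_by DK | weaken_by D].
  - apply lp_blind2; [weaken_by DR | weaken_by D].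
Qed.

Lemma left_premises_sound G N X : In X G -> is_sequent G N -> left_premises G N X -> der G N.
Proof.
  intros HX Hs HL.
  destruct HL as [P Q D|P K DK D|P K L HL HKL D|P K L HS HKL D|P K DK D|P R K DR D].
  - exact (d_pL Hs HX D).
  - exact (d_eL Hs HX DK D).
  - exact (d_signL Hs HX HL HKL D).
  - exact (d_signL Hs HS HX HKL D).
  - exact (d_blindL1 Hs HX DK D).
  - exact (d_blindL2 Hs HX DR D).
Qed.

Lemma right_premises_weaken {G G' M} : right_premises G M -> incl G G' -> Forall valid G' ->
  right_premises G' M.
Proof.
  intros HM Hi HG'; destruct M; simpl in *; try contradiction;
    destruct HM as [D1 D2]; (split; [weaken_by D1 | weaken_by D2]).
Qed.

Lemma right_premises_smaller {G M} : right_premises G M -> exists X, der G X /\ size X < size M.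
Proof. destruct M; simpl; try tauto; intros [D _]; exists M1; (split; [exact D | lia]). Qed.

Section EliminateHyp.
Variables (M : T) (G0 : list T).
Hypothesis Hcut : cut_below M.
Hypothesis elim_id : forall G N C, incl G0 G -> is_sequent G N ->
  E_ctx_over (M :: G) C -> E_eq N C -> der G N.
Hypothesis elim_left : forall G N, incl G0 G -> is_sequent G N -> left_premises G N M -> der G N.

Lemma principal_use G N X : In X (M :: G) -> incl G0 G -> is_sequent G N ->
  left_premises G N X -> der G N.
Proof.
  intros [<-|HX] Hi Hs HL; [exact (elim_left Hi Hs HL) | exact (left_premises_sound HX Hs HL)].
Qed.

Ltac premise D IH :=
  pose proof (derivable_ctx_valid D); apply IH; [incl_solve | valid_solve | incl_solve].

Lemma eliminate_hyp Gm N : der Gm N ->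
  forall G, incl G0 G -> Forall valid G -> incl Gm (M :: G) -> der G N.
Proof.
  induction 1 as [Gm N C Hs HC HE|Gm X N Hb Hs|Gm P Q N Hs Hin D IH|Gm P Q Hs D1 IH1 D2 IH2
    |Gm P K N Hs Hin D1 IH1 D2 IH2|Gm P K Hs D1 IH1 D2 IH2|Gm P K L N Hs Hin HinP Hac D IH
    |Gm P K Hs D1 IH1 D2 IH2|Gm P K N Hs Hin D1 IH1 D2 IH2|Gm P K Hs D1 IH1 D2 IH2
    |Gm P R K N Hs Hin D1 IH1 D2 IH2|Gm A N Hs Hg Hex D1 IH1 D2 IH2];
    intros G Hi HG HGm; pose proof (sequent_weaken Hs HG) as Hs'; try discriminate.
  - exact (elim_id Hi Hs' (E_ctx_over_incl HC HGm) HE).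
  - apply (principal_use (HGm _ Hin) Hi Hs'), lp_pair; premise D IH.
  - exact (d_pR Hs' (IH1 G Hi HG HGm) (IH2 G Hi HG HGm)).
  - apply (principal_use (HGm _ Hin) Hi Hs'), lp_enc; [exact (IH1 G Hi HG HGm) | premise D2 IH2].
  - exact (d_eR Hs' (IH1 G Hi HG HGm) (IH2 G Hi HG HGm)).
  - destruct (HGm _ HinP) as [HM|HinP'].
    + destruct (HGm _ Hin) as [HS|HinS]; [congruence|].
      apply (principal_use (or_introl HM) Hi Hs'), (lp_pub HinS Hac); premise D IH.
    + apply (principal_use (HGm _ Hin) Hi Hs'), (lp_sign HinP' Hac); premise D IH.
  - exact (d_signR Hs' (IH1 G Hi HG HGm) (IH2 G Hi HG HGm)).
  - apply (principal_use (HGm _ Hin) Hi Hs'), lp_blind; [exact (IH1 G Hi HG HGm) | premise D2 IH2].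
  - exact (d_blindR Hs' (IH1 G Hi HG HGm) (IH2 G Hi HG HGm)).
  - apply (principal_use (HGm _ Hin) Hi Hs'), lp_blind2; [exact (IH1 G Hi HG HGm) | premise D2 IH2].
  - destruct Hex as [u [Hu Hsub]].
    assert (DA : der (A :: G) N) by premise D2 IH2.
    assert (Hu' : u = M \/ In u (N :: G)).
    { destruct Hu as [<-|Hu]; [now right; left|].
      destruct (HGm _ Hu); [now left | now right; right]. }
    destruct Hu' as [->|Hu'].
    + destruct (classic (A = M)) as [->|Hne].
      * apply IH2; [exact Hi | exact HG | incl_solve].
      * destruct (subterm_size Hsub) as [|Hlt]; [contradiction|].
        exact (Hcut Hlt (IH1 G Hi HG HGm) DA).
    + exact (d_gs Hs' Hg (ex_intro _ u (conj Hu' Hsub)) (IH1 G Hi HG HGm) DA).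
Qed.
End EliminateHyp.

Section CutStep.
Variable M : T.
Hypothesis Hcut : cut_below M.

Lemma der_ac_variant G X Y : size X < size M -> der G X -> ac X Y -> valid Y -> der G Y.
Proof.
  intros Hs D HXY HY. pose proof (derivable_ctx_valid D); pose proof (derivable_goal_valid D).
  apply (Hcut Hs D), derivable_id with X; [now left | apply ac_eq_E_eq, rst_sym, HXY | valid_solve].
Qed.

Lemma ctx_ac_variant G X Y N : size X < size M -> ac X Y -> valid Y ->
  der (X :: G) N -> der (Y :: G) N.
Proof.
  intros Hs HXY HY D. pose proof (derivable_ctx_valid D).
  apply (Hcut Hs).
  - apply derivable_id with Y; [now left | apply ac_eq_E_eq, HXY | valid_solve].
  - weaken_by D.
Qed.

Lemma ctx_ac_variant2 G X1 X2 Y1 Y2 N : size X1 < size M -> size X2 < size M ->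
  ac X1 Y1 -> ac X2 Y2 -> valid Y1 -> valid Y2 ->
  der (X1 :: X2 :: G) N -> der (Y1 :: Y2 :: G) N.
Proof.
  intros Hs1 Hs2 H1 H2 HY1 HY2 D.
  assert (D1 : der (X2 :: Y1 :: G) N).
  { pose proof (ctx_ac_variant Hs1 H1 HY1 D) as D'. weaken_by D'. }
  pose proof (ctx_ac_variant Hs2 H2 HY2 D1) as D2. weaken_by D2.
Qed.

Lemma cut_components G X1 X2 N : size X1 < size M -> size X2 < size M ->
  der G X1 -> der G X2 -> der (X1 :: X2 :: G) N -> der G N.
Proof.
  intros Hs1 Hs2 D1 D2 D. pose proof (derivable_goal_valid D2).
  apply (Hcut Hs2 D2), (Hcut Hs1); [weaken_by D1 | exact D].
Qed.
End CutStep.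

Ltac variant_side HBv :=
  first [ simpl; lia | apply rst_sym; assumption | apply (valid_subterm HBv); auto ].

Lemma left_premises_ac_variant M G N B : left_premises G N M -> cut_below M ->
  In B G -> ac B M -> is_sequent G N -> der G N.
Proof.
  intros HL Hcut HB HBM Hs.
  assert (HBv : valid B) by exact (proj1 (Forall_forall _ _) (Forall_inv_tail Hs) B HB).
  destruct HL as [P Q D|P K DK D|P K L HL HKL D|P K L HS HKL D|P K DK D|P R K DR D].
  - destruct (ac_eq_Pair_inv HBM) as [P' [Q' [-> [HP HQ]]]].
    apply (d_pL Hs HB), (ctx_ac_variant2 Hcut (X1 := P) (X2 := Q)); auto; variant_side HBv.
  - destruct (ac_eq_Enc_inv HBM) as [P' [K' [-> [HP HK]]]].
    apply (d_eL Hs HB).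
    + apply (der_ac_variant Hcut (X := K)); auto; variant_side HBv.
    + apply (ctx_ac_variant2 Hcut (X1 := P) (X2 := K)); auto; variant_side HBv.
  - destruct (ac_eq_Sign_inv HBM) as [P' [K' [-> [HP HK]]]].
    apply (d_signL Hs HB HL (rst_trans _ _ _ _ _ HK HKL)).
    apply (ctx_ac_variant Hcut (X := P)); auto; variant_side HBv.
  - destruct (ac_eq_Pub_inv HBM) as [L' [-> HL']].
    exact (d_signL Hs HS HB (rst_trans _ _ _ _ _ HKL (rst_sym _ _ _ _ HL')) D).
  - destruct (ac_eq_Blind_inv HBM) as [P' [K' [-> [HP HK]]]].
    apply (d_blindL1 Hs HB).
    + apply (der_ac_variant Hcut (X := K)); auto; variant_side HBv.
    + apply (ctx_ac_variant2 Hcut (X1 := P) (X2 := K)); auto; variant_side HBv.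
  - destruct (ac_eq_Sign_inv HBM) as [B1 [K' [-> [HB1 HK]]]].
    destruct (ac_eq_Blind_inv HB1) as [P' [R' [-> [HP HR]]]].
    assert (HSv : valid (Sign P' K')).
    { pose proof (derivable_ctx_valid D) as HSPK; apply Forall_inv in HSPK as [HSw HSn].
      assert (HP' : valid P') by variant_side HBv. assert (HK' : valid K') by variant_side HBv.
      split; [constructor; [apply HP' | apply HK'] |].
      apply normal_ac_eq with (Sign P K); [apply cong_sign; apply rst_sym; assumption | exact HSn]. }
    apply (d_blindL2 Hs HB).
    + apply (der_ac_variant Hcut (X := R)); auto; variant_side HBv.
    + apply (ctx_ac_variant2 Hcut (X1 := Sign P K) (X2 := R)); auto; try variant_side HBv.
      apply cong_sign; apply rst_sym; assumption.
Qed.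

Lemma cut_E_generated M G0 C0 Gm N : cut_below M -> Forall valid G0 -> valid M ->
  E_ctx_over G0 C0 -> E_eq M C0 -> der Gm N -> incl Gm (M :: G0) -> der G0 N.
Proof.
  intros Hcut HG0 HM HC0 HMC0 D HGm.
  apply (eliminate_hyp Hcut (G0 := G0)) with Gm; [| |exact D|apply incl_refl|exact HG0|exact HGm].
  - intros G N' C Hi Hs HC HN'C.
    destruct (E_ctx_over_subst HC (E_ctx_over_incl HC0 Hi) (rst_sym _ _ _ _ HMC0) (incl_refl G))
      as [C' [HC' HCC']].
    exact (d_id false Hs HC' (rst_trans _ _ _ _ _ HN'C HCC')).
  - intros G N' Hi Hs HL.
    destruct (guarded_generated_subterm HG0 HC0 HMC0 (left_premises_guarded HL) HM)
      as [g [B [Hg [HB [HgB HBM]]]]].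
    assert (HBv : valid B) by exact (valid_subterm (proj1 (Forall_forall _ _) HG0 g Hg) HB).
    apply (d_gs Hs HgB (ex_intro _ g (conj (or_intror (Hi _ Hg)) HB))).
    + apply (d_id false (C := C0)); [valid_solve | exact (E_ctx_over_incl HC0 Hi) |].
      exact (rst_trans _ _ _ _ _ (ac_eq_E_eq HBM) HMC0).
    + apply (left_premises_ac_variant (M := M) (B := B)); [| exact Hcut | now left | exact HBM | valid_solve].
      apply (left_premises_weaken HL); [incl_solve | valid_solve].
Qed.

Lemma right_premises_ac_variant {M G B} : cut_below M -> right_premises G M -> ac B M ->
  valid B -> der G B.
Proof.
  intros Hcut HM HBM HBv. destruct M as [| |?|a b|a b|a b|a b|]; try contradiction;
    destruct HM as [Da Db]; pose proof (derivable_ctx_valid Da).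
  - destruct (ac_eq_Sign_inv HBM) as [a' [b' [-> [Ha Hb]]]].
    apply d_signR; [valid_solve | apply (der_ac_variant Hcut (X := a))
                   | apply (der_ac_variant Hcut (X := b))]; auto; variant_side HBv.
  - destruct (ac_eq_Blind_inv HBM) as [a' [b' [-> [Ha Hb]]]].
    apply d_blindR; [valid_solve | apply (der_ac_variant Hcut (X := a))
                    | apply (der_ac_variant Hcut (X := b))]; auto; variant_side HBv.
  - destruct (ac_eq_Pair_inv HBM) as [a' [b' [-> [Ha Hb]]]].
    apply d_pR; [valid_solve | apply (der_ac_variant Hcut (X := a))
                | apply (der_ac_variant Hcut (X := b))]; auto; variant_side HBv.
  - destruct (ac_eq_Enc_inv HBM) as [a' [b' [-> [Ha Hb]]]].
    apply d_eR; [valid_solve | apply (der_ac_variant Hcut (X := a))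
                | apply (der_ac_variant Hcut (X := b))]; auto; variant_side HBv.
Qed.

Lemma elim_id_right M G N C : cut_below M -> valid M -> right_premises G M -> is_sequent G N ->
  E_ctx_over (M :: G) C -> E_eq N C -> der G N.
Proof.
  intros Hcut HM HR Hs HC HNC.
  destruct (classic (exists u B, In u (N :: G) /\ subterm B u /\ guarded B /\ E_eq B M))
    as [[u [B [Hu [HB [HgB HBM]]]]]|Hno].
  - assert (HBv : valid B) by exact (valid_subterm (proj1 (Forall_forall _ _) Hs u Hu) HB).
    destruct (E_ctx_over_subst HC (ec_hole _ (B :: G) B (or_introl eq_refl)) HBM (incl_tl B (incl_refl G)))
      as [C' [HC' HCC']].
    apply (d_gs Hs HgB (ex_intro _ u (conj Hu HB))).
    + exact (right_premises_ac_variant Hcut HR (valid_E_eq_ac_eq HBv HM HBM) HBv).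
    + apply (d_id false (C := C')); [valid_solve | exact HC' | exact (rst_trans _ _ _ _ _ HNC HCC')].
  - destruct (right_premises_smaller HR) as [X [DX HX]].
    assert (Hfixed : forall g, In g (N :: G) -> abstract Sg rules M X g = g).
    { intros g Hg. apply abstract_fixed. intros B HB HgB HBM. apply Hno; eauto 6. }
    apply (Hcut X HX G N DX).
    pose proof (derivable_goal_valid DX).
    apply (d_id false (C := abstract Sg rules M X C)); [valid_solve | |].
    + exact (abstract_E_ctx _ _ HC (fun g Hg => Hfixed g (or_intror Hg)) (right_premises_guarded HR)).
    + rewrite <- (Hfixed N (or_introl eq_refl)). exact (abstract_E_eq M X HNC).
Qed.

Lemma elim_left_right M G N : cut_below M -> right_premises G M -> left_premises G N M -> der G N.
Proof.
  intros Hcut HR HL.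
  destruct HL as [P Q D|P K DK D|P K L HL HKL D|P K L HS HKL D|P K DK D|P R K DR D];
    simpl in HR; try contradiction; destruct HR as [D1 D2].
  1, 2, 4: refine (cut_components Hcut _ _ D1 D2 D); simpl; lia.
  - refine (Hcut P _ G N D1 D); simpl; lia.
  - assert (DS : der G (Sign P K)).
    { pose proof (derivable_goal_valid D1) as HB; pose proof (derivable_goal_valid D2).
      pose proof (derivable_ctx_valid D) as HSv; pose proof (derivable_ctx_valid D1).
      assert (valid P) by (apply (valid_subterm HB); auto).
      assert (valid R) by (apply (valid_subterm HB); auto).
      apply (Hcut (Blind P R) ltac:(simpl; lia) G _ D1).
      apply (d_blindL1 (M := P) (K := R)); [valid_solve | now left | weaken_by DR |].
      apply d_signR; [valid_solve | | weaken_by D2].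
      apply derivable_id with P; [now left | apply rst_refl | valid_solve]. }
    refine (cut_components Hcut _ _ DS DR D); simpl; lia.
Qed.

Lemma cut_right M G0 Gm N : cut_below M -> Forall valid G0 -> valid M -> right_premises G0 M ->
  der Gm N -> incl Gm (M :: G0) -> der G0 N.
Proof.
  intros Hcut HG0 HM HR D HGm.
  apply (eliminate_hyp Hcut (G0 := G0)) with Gm; [| |exact D|apply incl_refl|exact HG0|exact HGm].
  - intros G N' C Hi Hs.
    exact (elim_id_right Hcut HM (right_premises_weaken HR Hi (Forall_inv_tail Hs)) Hs).
  - intros G N' Hi Hs.
    exact (elim_left_right Hcut (right_premises_weaken HR Hi (Forall_inv_tail Hs))).
Qed.

Lemma cut_step M : cut_below M -> cut_admissible_at M.
Proof.
  intros Hcut G N D1 D2.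
  enough (H : forall G0 M0, der G0 M0 -> M0 = M ->
                forall Gm N, der Gm N -> incl Gm (M :: G0) -> der G0 N)
    by exact (H G M D1 eq_refl _ N D2 (incl_refl _)).
  clear G N D1 D2.
  induction 1 as [G0 M0 C Hs HC HE|G0 X M0 Hb|G0 P Q M0 Hs Hin D IH|G0 P Q Hs D1 _ D2 _
    |G0 P K M0 Hs Hin D1 _ D2 IH|G0 P K Hs D1 _ D2 _|G0 P K L M0 Hs Hin Hin' Hac D IH
    |G0 P K Hs D1 _ D2 _|G0 P K M0 Hs Hin D1 _ D2 IH|G0 P K Hs D1 _ D2 _
    |G0 P R K M0 Hs Hin D1 _ D2 IH|G0 A M0 Hs Hg Hex D1 IH1 D2 IH2];
    intros <- Gm N DN HGm; try discriminate;
    pose proof (Forall_inv Hs) as HM; pose proof (Forall_inv_tail Hs) as HG0;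
    pose proof (derivable_goal_valid DN) as HN; pose proof (mk_sequent HN HG0) as HsN.
  - exact (cut_E_generated Hcut HG0 HM HC HE DN HGm).
  - apply (d_pL HsN Hin), (IH eq_refl Gm N DN); incl_solve.
  - exact (cut_right Hcut HG0 HM (conj D1 D2) DN HGm).
  - apply (d_eL HsN Hin D1), (IH eq_refl Gm N DN); incl_solve.
  - exact (cut_right Hcut HG0 HM (conj D1 D2) DN HGm).
  - apply (d_signL HsN Hin Hin' Hac), (IH eq_refl Gm N DN); incl_solve.
  - exact (cut_right Hcut HG0 HM (conj D1 D2) DN HGm).
  - apply (d_blindL1 HsN Hin D1), (IH eq_refl Gm N DN); incl_solve.
  - exact (cut_right Hcut HG0 HM (conj D1 D2) DN HGm).
  - apply (d_blindL2 HsN Hin D1), (IH eq_refl Gm N DN); incl_solve.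
  - assert (DA : der (A :: G0) N) by (apply (IH2 eq_refl Gm N DN); incl_solve).
    destruct Hex as [u [[<-|Hu] Hsub]].
    + destruct (classic (A = M0)) as [->|Hne]; [exact (IH1 eq_refl Gm N DN HGm)|].
      destruct (subterm_size Hsub) as [|Hlt]; [contradiction|].
      exact (Hcut A Hlt G0 N D1 DA).
    + exact (d_gs HsN Hg (ex_intro _ u (conj (or_intror Hu) Hsub)) D1 DA).
Qed.

Lemma cut_admissible A : cut_admissible_at A.
Proof.
  induction A as [A IH] using (well_founded_induction (well_founded_ltof _ (@size _))).
  exact (cut_step IH).
Qed.

Lemma cut_elimination b G M : derivable Sg rules b G M -> der G M.
Proof.
  induction 1 as [G M C Hs HC HE|G M N _ _ _ IH1 _ IH2|G M N U Hs Hin _ IH|G M N Hs _ IH1 _ IH2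
    |G M K N Hs Hin _ IH1 _ IH2|G M K Hs _ IH1 _ IH2|G M K L N Hs Hin Hin' Hac _ IH
    |G M K Hs _ IH1 _ IH2|G M K N Hs Hin _ IH1 _ IH2|G M K Hs _ IH1 _ IH2
    |G M R K N Hs Hin _ IH1 _ IH2|G A M Hs Hg Hex _ IH1 _ IH2].
  - exact (d_id false Hs HC HE).
  - exact (cut_admissible IH1 IH2).
  - exact (d_pL Hs Hin IH).
  - exact (d_pR Hs IH1 IH2).
  - exact (d_eL Hs Hin IH1 IH2).
  - exact (d_eR Hs IH1 IH2).
  - exact (d_signL Hs Hin Hin' Hac IH).
  - exact (d_signR Hs IH1 IH2).
  - exact (d_blindL1 Hs Hin IH1 IH2).
  - exact (d_blindR Hs IH1 IH2).
  - exact (d_blindL2 Hs Hin IH1 IH2).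
  - exact (d_gs Hs Hg Hex IH1 IH2).
Qed.

End CutElimination.

Theorem theorem1 (S : signature) (n : nat) (rules : list (pat (sym S) * pat (sym S)))
    (HE : admissible_theory S n rules) (G : list (term (sym S))) (M : term (sym S)) :
  derivable S rules true G M -> derivable S rules false G M.
Proof.
  destruct HE as (_ & _ & _ & _ & _ & Hterm & Hconf).
  apply (cut_elimination Hterm Hconf).
Qed.
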